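(* Under the hypotheses of Theorem 5 (conditions (C1), (C2a),(C3a) with $R_i(q)=Y_i(q)$, (C2b),(C3b), (C4), (C5), (C7), and $n_{[m]q}\ge2$ for all $m,q$), for every $f\in\{1,\dots,F\}$ the $(f,f)$ diagonal entries satisfy $$\{\tilde V(Y)\}_{ff}\ge\{\tilde V(\eta)\}_{ff}\quad\text{and}\quad\{V(Y)\}_{ff}\ge\{V(\eta)\}_{ff},$$ i.e. each component of $\hat\tau_{\mathrm{cond}}$ has asymptotic variance no larger than the corresponding component of $\hat\tau_{\mathrm{unadj}}$, and the probability limit of each diagonal entry of $\hat V_n(\hat\eta)$ is no larger than that of $\hat V_n(Y)$. In particular, when $K=1$ ($Q=2$, $F=1$), $\tilde V(Y)\ge\tilde V(\eta)$ and $V(Y)\ge V(\eta)$. This holds whether or not the propensity scores are equal across strata.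
   Context: Setup. A finite population of $n$ units is partitioned into $M$ strata; stratum $m$ contains $n_{[m]}$ units ($\sum_m n_{[m]}=n$), and $i\in[m]$ means unit $i$ belongs to stratum $m$. There are $Q$ treatments. In a stratified randomized experiment, for fixed integers $n_{[m]q}\ge1$ with $\sum_{q=1}^Q n_{[m]q}=n_{[m]}$, the assignment $Z=(Z_1,\dots,Z_n)$ is drawn uniformly among all assignments in which exactly $n_{[m]q}$ units of stratum $m$ receive treatment $q$, independently across strata. Write $\pi_{[m]}=n_{[m]}/n$ and $e_{[m]q}=n_{[m]q}/n_{[m]}$. All potential outcomes and covariates are fixed; the only randomness is $Z$. For unit-level column vectors $R_i(q)$ define $\bar R_{[m]}(q)=n_{[m]}^{-1}\sum_{i\in[m]}R_i(q)$, $\hat{\bar R}_{[m]}(q)=n_{[m]q}^{-1}\sum_{i\in[m]}I(Z_i=q)R_i(q)$, $\bar R(q)=\sum_m\pi_{[m]}\bar R_{[m]}(q)$ and $\hat{\bar R}(q)=\sum_m\pi_{[m]}\hat{\bar R}_{[m]}(q)$. For unit-level vectors $H_i,G_i$, $S_{[m]HG}=(n_{[m]}-1)^{-1}\sum_{i\in[m]}(H_i-\bar H_{[m]})(G_i-\bar G_{[m]})^T$ and $S^2_{[m]H}=S_{[m]HH}$. Arm-specific sample covariances: $s_{[m]XX}(q)=(n_{[m]q}-1)^{-1}\sum_{i\in[m]}I(Z_i=q)(X_i-\hat{\bar X}_{[m]}(q))(X_i-\hat{\bar X}_{[m]}(q))^T$, $s_{[m]XY}(q)=(n_{[m]q}-1)^{-1}\sum_{i\in[m]}I(Z_i=q)(X_i-\hat{\bar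 X}_{[m]}(q))(Y_i(q)-\hat{\bar Y}_{[m]}(q))$. All quantities depend on $n$; limits are as $n\to\infty$. Factorial setup. $Q=2^K$ treatment combinations ($K$ fixed) and $F=Q-1$ factorial effects. For $f=1,\dots,F$, $g_f=(g_{f,1},\dots,g_{f,Q})^T\in\{-1,+1\}^Q$ is the generating vector of the $f$th factorial effect: for a main effect of factor $k$, $g_{k,q}$ is the level ($\pm1$) of factor $k$ in combination $q$; for an interaction, $g_f$ is the entrywise product of the main-effect generating vectors of the factors involved. In particular $\sum_q g_{f,q}=0$. Let $d_q=(g_{1,q},\dots,g_{F,q})^T$, so $\sum_q d_q=0$. Each unit has potential outcomes $Y_i(q)\in\mathbb R$ (observed outcome $Y_i(Z_i)$) and a covariate vector $X_i\in\mathbb R^p$ ($p$ fixed), with stratum mean $\bar X_{[m]}$ and $\bar X=\sum_m\pi_{[m]}\bar X_{[m]}$. $\tau=2^{-(K-1)}\sum_q d_q\bar Y(q)$ and $\hat\tau_{\mathrm{unadj}}=2^{-(K-1)}\sum_q d_q\hat{\bar Y}(q)$. Conditional adjustment. $\gamma=\lim_{n}\big(\sum_m\pi_{[m]}\sum_q e_{[m]q}^{-1}S_{[m]XX}\big)^{-1}\big(\sum_m\pi_{[m]}\sum_q e_{[m]q}^{-1}S_{[m]XY(q)}\big)$, $\hat\gamma=\big(\sum_m\pi_{[m]}\sum_q e_{[m]q}^{-1}s_{[m]XX}(q)\big)^{-1}\big(\sum_m\pi_{[m]}\sum_q e_{[m]q}^{-1}s_{[m]XY}(q)\big)$, and $\hat\tau_{\mathrm{cond}}=2^{-(K-1)}\sum_q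 d_q\big[\hat{\bar Y}(q)-\{\hat{\bar X}(q)-\bar X\}^T\hat\gamma\big]$. Decomposition errors $\eta_i(q)=Y_i(q)-\bar Y_{[m]}(q)-(X_i-\bar X_{[m]})^T\gamma$ and residuals $\hat\eta_i(q)=Y_i(q)-\hat{\bar Y}_{[m]}(q)-\{X_i-\hat{\bar X}_{[m]}(q)\}^T\hat\gamma$ for $i\in[m]$. Variance notation. For unit-level scalars $W_i(q)$: $V_n(W)=2^{-2(K-1)}\sum_m\pi_{[m]}\sum_q e_{[m]q}^{-1}S^2_{[m]W(q)}d_qd_q^T$, $\tilde V_n(W)=V_n(W)-\sum_m\pi_{[m]}S^2_{[m]\tau^W}$ with $\tau^W_i=2^{-(K-1)}\sum_q d_qW_i(q)$; $V(W),\tilde V(W)$ denote limits as $n\to\infty$. For quantities $\hat W_i(q)$ computable for units with $Z_i=q$, $\hat V_n(\hat W)=2^{-2(K-1)}\sum_m\pi_{[m]}\sum_q e_{[m]q}^{-1}s^2_{[m]\hat W(q)}d_qd_q^T$, with $s^2_{[m]\hat W(q)}$ the sample variance of $\hat W_i(q)$ over units $i\in[m]$ with $Z_i=q$ (denominator $n_{[m]q}-1$); $\hat V_n(Y)$ uses $\hat W_i(q)=Y_i(q)$. Conditions. (C1): there exist constants $C_1\in(0,1/2)$ and $e^\infty_{[m]q}$, independent of $n$, with $C_1<e^\infty_{[m]q}<1-C_1$ and $\max_m\max_q|e_{[m]q}-e^\infty_{[m]q}|\to0$. (C2a): for a constant $C_2>0$ independent of $n$, $\max_m\max_q n_{[m]}^{-1}\sum_{i\in[m]}|Y_i(q)-\bar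 Y_{[m]}(q)|^2\le C_2$. (C2b): $\max_m n_{[m]}^{-1}\sum_{i\in[m]}\|X_i-\bar X_{[m]}\|_\infty^2\le C_2$. (C3a): $n^{-1}\max_m\max_{i\in[m]}\max_q|Y_i(q)-\bar Y_{[m]}(q)|^2\to0$. (C3b): $n^{-1}\max_m\max_{i\in[m]}\|X_i-\bar X_{[m]}\|_\infty^2\to0$. (C4): $\sum_m\pi_{[m]}S^2_{[m]Y(q)}/e_{[m]q}$ and $\sum_m\pi_{[m]}S_{[m]Y(q)Y(q')}$ converge to finite limits. (C5): for each $q$, $\sum_m\frac{\pi_{[m]}}{e_{[m]q}}S_{[m]XX}$, $\sum_m\pi_{[m]}S_{[m]XX}$, $\sum_m\frac{\pi_{[m]}}{e_{[m]q}}S_{[m]XY(q)}$, $\sum_m\pi_{[m]}S_{[m]XY(q)}$ converge to finite limits, and the limits of the first two matrices and of their difference are positive definite. (C7): $\sum_m\pi_{[m]}S^2_{[m]\eta(q)}/e_{[m]q}$ and $\sum_m\pi_{[m]}S_{[m]\eta(q)\eta(q')}$ converge to finite limits. *)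

From HB Require Import structures.
From mathcomp Require Import all_boot all_order all_algebra.
From mathcomp Require Import all_classical all_reals all_analysis.
Set Implicit Arguments. Unset Strict Implicit. Unset Printing Implicit Defensive.
Import Order.TTheory GRing.Theory Num.Theory.
Import numFieldNormedType.Exports.
Local Open Scope classical_set_scope.
Local Open Scope ring_scope.

(* Treatment combinations of a 2^K factorial design: a level (+1 = true,
   -1 = false) for each of the K factors. *)
Definition treat (K : nat) := {ffun 'I_K -> bool}.

(* Factorial effects are indexed by nonempty sets f of factors: {k} is the
   main effect of factor k, larger sets are interactions.  g_{f,q}: *)
Definition gen {R : realType} {K : nat} (f : {set 'I_K}) (q : treat K) : R :=
  \prod_(k in f) (if q k then 1 else -1).

(* A finite population partitioned into strata; unit i of stratum m is
   (m, i : 'I_(nst m)).  nmq m q = n_{[m]q}, the number of units of stratum m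
   assigned to treatment q. *)
Record population (R : realType) (K p : nat) : Type := Pop {
  M : nat;
  nst : 'I_M -> nat;
  Yo : forall m : 'I_M, 'I_(nst m) -> treat K -> R;
  Xc : forall m : 'I_M, 'I_(nst m) -> 'cV[R]_p;
  nmq : 'I_M -> treat K -> nat }.
Arguments M {R K p} _.
Arguments nst {R K p} _ _.
Arguments Yo {R K p} _ _ _ _.
Arguments Xc {R K p} _ _ _.
Arguments nmq {R K p} _ _ _.

Section Defs.
Variables (R : realType) (K p : nat).

(* finite maximum (of nonnegative quantities) *)
Definition bmax (I : finType) (F : I -> R) : R := \big[Num.max/0]_(i : I) F i.

Definition avg N (w : 'I_N -> R) : R := (N%:R)^-1 * \sum_(i < N) w i.
Definition avgv a N (x : 'I_N -> 'cV[R]_a) : 'cV[R]_a :=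
  (N%:R)^-1 *: \sum_(i < N) x i.
Definition scov N (h g : 'I_N -> R) : R :=
  ((N%:R - 1)^-1) * \sum_(i < N) (h i - avg h) * (g i - avg g).
Definition Smat a N (x : 'I_N -> 'cV[R]_a) : 'M[R]_a :=
  ((N%:R - 1)^-1) *: \sum_(i < N) ((x i - avgv x) *m (x i - avgv x)^T).
Definition Sxy a N (x : 'I_N -> 'cV[R]_a) (y : 'I_N -> R) : 'cV[R]_a :=
  ((N%:R - 1)^-1) *: \sum_(i < N) ((y i - avg y) *: (x i - avgv x)).

Definition ninf a (v : 'cV[R]_a) : R := bmax (fun k : 'I_a => `|v k 0|).

Variable P : population R K p.

Definition ntot : nat := \sum_(m < M P) nst P m.
Definition pis (m : 'I_(M P)) : R := (nst P m)%:R / (ntot%:R).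
Definition es (m : 'I_(M P)) (q : treat K) : R := (nmq P m q)%:R / (nst P m)%:R.

Definition unitfun := forall m : 'I_(M P), 'I_(nst P m) -> treat K -> R.

Definition c2 : R := ((2 ^ (K - 1))%N%:R)^-1.

Definition Vn (W : unitfun) (f f' : {set 'I_K}) : R :=
  c2 ^+ 2 * \sum_(m < M P) pis m *
    \sum_(q : treat K) (es m q)^-1 *
       scov (fun i => W m i q) (fun i => W m i q) * gen f q * gen f' q.

Definition tauW (W : unitfun) (m : 'I_(M P)) (i : 'I_(nst P m)) (f : {set 'I_K}) : R :=
  c2 * \sum_(q : treat K) gen f q * W m i q.

Definition Vtn (W : unitfun) (f f' : {set 'I_K}) : R :=
  Vn W f f' - \sum_(m < M P) pis m * scov (fun i => @tauW W m i f) (fun i => @tauW W m i f').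

Definition Yf : unitfun := fun m i q => Yo P m i q.

Definition etaW (gamma : 'cV[R]_p) : unitfun := fun m i q =>
  Yo P m i q - avg (fun j => Yo P m j q) - ((Xc P m i - avgv (Xc P m))^T *m gamma) 0 0.

Definition Bmat : 'M[R]_p :=
  \sum_(m < M P) pis m *: \sum_(q : treat K) (es m q)^-1 *: Smat (Xc P m).
Definition Avec : 'cV[R]_p :=
  \sum_(m < M P) pis m *: \sum_(q : treat K) (es m q)^-1 *: Sxy (Xc P m) (fun i => Yo P m i q).
Definition gamma_n : 'cV[R]_p := invmx Bmat *m Avec.

Definition SXXe (q : treat K) : 'M[R]_p :=
  \sum_(m < M P) (pis m / es m q) *: Smat (Xc P m).
Definition SXX : 'M[R]_p := \sum_(m < M P) pis m *: Smat (Xc P m).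
Definition SXYe (q : treat K) : 'cV[R]_p :=
  \sum_(m < M P) (pis m / es m q) *: Sxy (Xc P m) (fun i => Yo P m i q).
Definition SXY (q : treat K) : 'cV[R]_p :=
  \sum_(m < M P) pis m *: Sxy (Xc P m) (fun i => Yo P m i q).

Definition SWe (W : unitfun) (q : treat K) : R :=
  \sum_(m < M P) pis m * scov (fun i => W m i q) (fun i => W m i q) / es m q.
Definition SWW (W : unitfun) (q q' : treat K) : R :=
  \sum_(m < M P) pis m * scov (fun i => W m i q) (fun i => W m i q').

End Defs.
Arguments Yf {R K p} P _ _ _.
Arguments etaW {R K p} P gamma _ _ _.

Definition mx_cvg (R : realType) a b (A : nat -> 'M[R]_(a, b)) (L : 'M[R]_(a, b)) :=
  forall i j, (fun v => A v i j) @ \oo --> L i j.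

Definition posdef (R : realType) a (A : 'M[R]_a) :=
  forall v : 'cV[R]_a, v != 0 -> 0 < (v^T *m A *m v) 0 0.

From HB Require Import structures.
From mathcomp Require Import all_boot all_order all_algebra.
From mathcomp Require Import all_classical all_reals all_analysis.
From mathcomp Require Import ring.
Import Order.TTheory GRing.Theory Num.Theory.
Import numFieldNormedType.Exports.
Local Open Scope classical_set_scope.
Local Open Scope ring_scope.
Set Implicit Arguments. Unset Strict Implicit. Unset Printing Implicit Defensive.

(* Write A_n = sum_m pi_m sum_q e_{mq}^-1 S_{[m]XY(q)} and
   B_n = sum_m pi_m sum_q e_{mq}^-1 S_{[m]XX}, so that gamma_n = B_n^-1 A_n.
   1. Algebra within one stratum and arm: the sample variance of the residual
      Y - Ybar - (X - Xbar)' g is S_YY - 2 g' S_XY + g' S_XX g.  Since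
      g_{f,q}^2 = 1 this gives, for every n,
        V_n(Y)_ff - V_n(eta)_ff = 2^{-2(K-1)} (2 g' A_n - g' B_n g).
      Since sum_q g_{f,q} = 0, tau^eta_i differs from tau^Y_i by a constant
      within each stratum, so the same identity holds for tilde V_n.
   2. Limits: by (C5), B_n -> B = sum_q lim SXXe(q), which is positive
      definite, hence eventually B_n is invertible and B_n gamma_n = A_n;
      passing to the limit gives A = B gamma, so the gap tends to
      2^{-2(K-1)} gamma' B gamma >= 0.
   Only (C5) and the convergence gamma_n -> gamma are needed; the remaining
   hypotheses of the theorem are those under which the variances are the
   asymptotic variances of the estimators. *)

Section FiniteLimits.
Variable R : realType.

Lemma cvg_sum (I : Type) (r : seq I) (P : pred I) (u : I -> nat -> R) (l : I -> R) :
  (forall i, P i -> u i @ \oo --> l i) ->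
  (fun v => \sum_(i <- r | P i) u i v) @ \oo --> \sum_(i <- r | P i) l i.
Proof. by apply: cvg_big => //; exact: add_continuous. Qed.

Lemma cvg_prod (I : Type) (r : seq I) (P : pred I) (u : I -> nat -> R) (l : I -> R) :
  (forall i, P i -> u i @ \oo --> l i) ->
  (fun v => \prod_(i <- r | P i) u i v) @ \oo --> \prod_(i <- r | P i) l i.
Proof. by apply: cvg_big => //; exact: mul_continuous. Qed.

Lemma mx_cvg_cst m n (L : 'M[R]_(m, n)) : mx_cvg (fun=> L) L.
Proof. by move=> i j; exact: cvg_cst. Qed.

Lemma mx_cvg_sum m n (I : Type) (r : seq I) (P : pred I)
    (A : I -> nat -> 'M[R]_(m, n)) (L : I -> 'M[R]_(m, n)) :
  (forall i, P i -> mx_cvg (A i) (L i)) ->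
  mx_cvg (fun v => \sum_(i <- r | P i) A i v) (\sum_(i <- r | P i) L i).
Proof.
move=> cA i j; rewrite summxE; under eq_cvg do rewrite summxE.
by apply: cvg_sum => k Pk; exact: cA.
Qed.

Lemma mx_cvg_mul m n k (A : nat -> 'M[R]_(m, n)) (B : nat -> 'M[R]_(n, k)) LA LB :
  mx_cvg A LA -> mx_cvg B LB -> mx_cvg (fun v => A v *m B v) (LA *m LB).
Proof.
move=> cA cB i j; rewrite mxE; under eq_cvg do rewrite mxE.
by apply: cvg_sum => l _; exact: cvgM.
Qed.

(* The determinant is a polynomial in the entries, hence continuous. *)
Lemma cvg_det n (A : nat -> 'M[R]_n) L :
  mx_cvg A L -> (fun v => \det (A v)) @ \oo --> \det L.
Proof.
move=> cA; apply: cvg_sum => s _; apply: cvgM; first exact: cvg_cst.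
by apply: cvg_prod => i _; exact: cA.
Qed.

Lemma mx_cvg_unique m n (A : nat -> 'M[R]_(m, n)) L1 L2 :
  mx_cvg A L1 -> mx_cvg A L2 -> L1 = L2.
Proof. by move=> c1 c2; apply/matrixP => i j; exact: cvg_unique (c1 i j) (c2 i j). Qed.

Lemma mx_cvg_near_eq m n (A B : nat -> 'M[R]_(m, n)) L :
  (\forall v \near \oo, A v = B v) -> mx_cvg A L -> mx_cvg B L.
Proof.
move=> AB cA i j; apply: cvg_trans (cA i j); apply: near_eq_cvg.
by apply: filterS AB => v ->.
Qed.

Lemma unitmx_near m (A : nat -> 'M[R]_m) L :
  mx_cvg A L -> L \in unitmx -> \forall v \near \oo, A v \in unitmx.
Proof.
move=> cA; rewrite unitmxE unitfE => detL.
near=> v; rewrite unitmxE unitfE; near: v.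
exact: cvgr_neq0 (cvg_det cA) detL.
Unshelve. all: by end_near.
Qed.
End FiniteLimits.

Section PosDef.
Variable R : realType.

(* A positive definite matrix has no nonzero left kernel, so it is invertible. *)
Lemma posdef_unitmx n (A : 'M[R]_n) : posdef A -> A \in unitmx.
Proof.
move=> pA; rewrite unitmxE unitfE; apply/negP => /det0P[r r0 rA].
by have := pA r^T; rewrite trmx_eq0 trmxK rA mul0mx mxE ltxx => /(_ r0).
Qed.

Lemma posdef_quad_ge0 n (A : 'M[R]_n) (u : 'cV[R]_n) :
  posdef A -> 0 <= (u^T *m A *m u) 0 0.
Proof.
move=> pA; have [->|u0] := eqVneq u 0; first by rewrite mulmx0 mxE.
exact/ltW/pA.
Qed.

Lemma posdef_sum (I : finType) (i0 : I) n (A : I -> 'M[R]_n) :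
  (forall i, posdef (A i)) -> posdef (\sum_i A i).
Proof.
move=> pA u u0; rewrite mulmx_sumr mulmx_suml summxE (bigD1 i0) //=.
by apply: ltr_wpDr (pA i0 u u0); apply: sumr_ge0 => i _; exact: posdef_quad_ge0.
Qed.
End PosDef.

Section StratumAlgebra.
Variable R : realType.

Lemma dotZ n (u w : 'cV[R]_n) c : (u^T *m (c *: w)) 0 0 = c * (u^T *m w) 0 0.
Proof. by rewrite -scalemxAr mxE. Qed.

Lemma dot_sum n I (r : seq I) (P : pred I) (u : 'cV[R]_n) (w : I -> 'cV[R]_n) :
  (u^T *m \sum_(i <- r | P i) w i) 0 0 = \sum_(i <- r | P i) (u^T *m w i) 0 0.
Proof. by rewrite mulmx_sumr summxE. Qed.

Lemma dotC n (u w : 'cV[R]_n) : (u^T *m w) 0 0 = (w^T *m u) 0 0.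
Proof. by rewrite -[w^T *m u]trmxK trmx_mul trmxK [RHS]mxE. Qed.

Lemma quadZ n (u : 'cV[R]_n) (A : 'M[R]_n) c :
  (u^T *m (c *: A) *m u) 0 0 = c * (u^T *m A *m u) 0 0.
Proof. by rewrite -scalemxAr -scalemxAl mxE. Qed.

Lemma quad_sum n I (r : seq I) (P : pred I) (u : 'cV[R]_n) (A : I -> 'M[R]_n) :
  (u^T *m (\sum_(i <- r | P i) A i) *m u) 0 0 = \sum_(i <- r | P i) (u^T *m A i *m u) 0 0.
Proof. by rewrite mulmx_sumr mulmx_suml summxE. Qed.

Lemma quad_outer n (u d : 'cV[R]_n) :
  (u^T *m (d *m d^T) *m u) 0 0 = (d^T *m u) 0 0 ^+ 2.
Proof. by rewrite mulmxA -mulmxA [in LHS]mxE big_ord1 dotC expr2. Qed.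

Lemma sum_centered N (a : 'I_N -> R) : \sum_i (a i - avg a) = 0.
Proof.
rewrite sumrB sumr_const card_ord /avg; case: N a => [|N] a.
  by rewrite big_ord0 mulr0 mulr0n subr0.
by rewrite -[_ *+ _]mulr_natl mulrA mulfV ?mul1r ?subrr // pnatr_eq0.
Qed.

Lemma sum_centeredv n N (x : 'I_N -> 'cV[R]_n) : \sum_i (x i - avgv x) = 0.
Proof.
rewrite sumrB sumr_const card_ord /avgv; case: N x => [|N] x.
  by rewrite big_ord0 scaler0 mulr0n subr0.
by rewrite -[_ *+ _]scaler_nat scalerA mulfV ?scale1r ?subrr // pnatr_eq0.
Qed.

Lemma scov_shift N (h : 'I_N -> R) c :
  scov (fun i => h i - c) (fun i => h i - c) = scov h h.
Proof.
rewrite /scov; case: N h => [|N] h; first by rewrite !big_ord0.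
have -> : avg (fun i => h i - c) = avg h - c.
  rewrite /avg sumrB sumr_const card_ord mulrBr -[c *+ _]mulr_natl mulrA.
  by rewrite mulVf ?mul1r // pnatr_eq0.
by congr (_ * _); apply: eq_bigr => i _; ring.
Qed.

Lemma scov_residual N (y : 'I_N -> R) n (x : 'I_N -> 'cV[R]_n) (g : 'cV[R]_n) :
  scov (fun i => y i - avg y - ((x i - avgv x)^T *m g) 0 0)
       (fun i => y i - avg y - ((x i - avgv x)^T *m g) 0 0)
  = scov y y - 2 * (g^T *m Sxy x y) 0 0 + (g^T *m Smat x *m g) 0 0.
Proof.
set b := fun i => ((x i - avgv x)^T *m g) 0 0.
set d := fun i => y i - avg y.
have sum_b : \sum_i b i = 0.
  rewrite -summxE -mulmx_suml.
  have -> : \sum_i (x i - avgv x)^T = (\sum_i (x i - avgv x))^T by rewrite raddf_sum.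
  by rewrite sum_centeredv trmx0 mul0mx mxE.
have avg_res : avg (fun i => d i - b i) = 0.
  by rewrite /avg sumrB sum_centered sum_b subrr mulr0.
have Sxy_b : (g^T *m Sxy x y) 0 0 = (N%:R - 1)^-1 * \sum_i d i * b i.
  by rewrite dotZ dot_sum; congr (_ * _); apply: eq_bigr => i _; rewrite dotZ dotC.
have Smat_b : (g^T *m Smat x *m g) 0 0 = (N%:R - 1)^-1 * \sum_i b i ^+ 2.
  by rewrite quadZ quad_sum; congr (_ * _); apply: eq_bigr => i _; rewrite quad_outer.
rewrite Sxy_b Smat_b /scov avg_res -/d.
have -> : \sum_i (d i - b i - 0) * (d i - b i - 0) =
    \sum_i d i * d i - 2 * \sum_i d i * b i + \sum_i b i ^+ 2.
  rewrite mulr_sumr -sumrB -big_split /=; apply: eq_bigr => i _; ring.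
ring.
Qed.

Lemma gen_sq K (f : {set 'I_K}) (q : treat K) : gen f q * gen f q = 1 :> R.
Proof.
rewrite /gen -big_split /=; apply: big1 => k _.
by case: (q k); rewrite ?mulr1 ?mulrNN ?mulr1.
Qed.

(* ... and a factorial effect contrast sums to zero: the factor k0 in f
   contributes a factor 1 + (-1) after expanding the product over factors. *)
Lemma gen_sum K (f : {set 'I_K}) : f != finset.set0 -> \sum_(q : treat K) gen f q = 0 :> R.
Proof.
case/set0Pn => k0 k0f.
pose level k (b : bool) : R := if k \in f then (if b then 1 else -1) else 1.
have genE q : gen f q = \prod_k level k (q k) by rewrite /gen big_mkcond.
under eq_bigr do rewrite genE.
rewrite -(bigA_distr_bigA level) (bigD1 k0) //= /level k0f big_bool /=.
by rewrite subrr mul0r.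
Qed.
End StratumAlgebra.

Section Population.
Variables (R : realType) (K p : nat) (P : population R K p).

Lemma Bmat_SXXe : Bmat P = \sum_(q : treat K) SXXe P q.
Proof.
rewrite /Bmat /SXXe; under eq_bigr do rewrite scaler_sumr.
by rewrite exchange_big; apply: eq_bigr => q _; apply: eq_bigr => m _; rewrite scalerA.
Qed.

Lemma Avec_SXYe : Avec P = \sum_(q : treat K) SXYe P q.
Proof.
rewrite /Avec /SXYe; under eq_bigr do rewrite scaler_sumr.
by rewrite exchange_big; apply: eq_bigr => q _; apply: eq_bigr => m _; rewrite scalerA.
Qed.

Variable g : 'cV[R]_p.

Lemma Vn_gap (f : {set 'I_K}) :
  Vn (Yf P) f f - Vn (etaW P g) f f =
  c2 R K ^+ 2 * (2 * (g^T *m Avec P) 0 0 - (g^T *m Bmat P *m g) 0 0).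
Proof.
have gap_form : 2 * (g^T *m Avec P) 0 0 - (g^T *m Bmat P *m g) 0 0 =
    \sum_m pis m * \sum_q (es m q)^-1 *
      (2 * (g^T *m Sxy (Xc P m) (fun i => Yo P m i q)) 0 0
       - (g^T *m Smat (Xc P m) *m g) 0 0).
  rewrite /Avec /Bmat dot_sum quad_sum mulr_sumr -sumrB; apply: eq_bigr => m _.
  rewrite dotZ quadZ dot_sum quad_sum !mulr_sumr -sumrB; apply: eq_bigr => q _.
  by rewrite dotZ quadZ; ring.
rewrite gap_form /Vn -mulrBr -sumrB; congr (_ * _); apply: eq_bigr => m _.
rewrite -mulrBr -sumrB; congr (_ * _); apply: eq_bigr => q _.
by rewrite /etaW /Yf scov_residual -!mulrA gen_sq !mulr1 /scov; ring.
Qed.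

Lemma tauW_eta (m : 'I_(M P)) (i : 'I_(nst P m)) (f : {set 'I_K}) :
  f != finset.set0 ->
  tauW (etaW P g) i f =
  tauW (Yf P) i f - c2 R K * \sum_q gen f q * avg (fun j => Yo P m j q).
Proof.
move=> f0; rewrite /tauW /etaW /Yf -mulrBr -sumrB; congr (_ * _).
set b := ((Xc P m i - avgv (Xc P m))^T *m g) 0 0.
transitivity (\sum_q (gen f q * Yo P m i q - gen f q * avg (fun j => Yo P m j q))
              - (\sum_q gen f q) * b).
  by rewrite mulr_suml -sumrB; apply: eq_bigr => q _; ring.
by rewrite gen_sum // mul0r subr0.
Qed.

Lemma Vtn_gap (f : {set 'I_K}) : f != finset.set0 ->
  Vtn (Yf P) f f - Vtn (etaW P g) f f = Vn (Yf P) f f - Vn (etaW P g) f f.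
Proof.
move=> f0; rewrite /Vtn.
under [X in _ - (_ - X)]eq_bigr => m _ do
  rewrite (funext (fun i => tauW_eta i f0)) scov_shift.
ring.
Qed.
End Population.

Section Limits.
Variables (R : realType) (K p : nat) (P : nat -> population R K p).
Variables (gamma A : 'cV[R]_p) (B : 'M[R]_p).
Hypotheses (cvg_Bmat : mx_cvg (fun v => Bmat (P v)) B)
  (cvg_Avec : mx_cvg (fun v => Avec (P v)) A) (posB : posdef B)
  (cvg_gamma : mx_cvg (fun v => gamma_n (P v)) gamma).

Lemma normal_equations_limit : A = B *m gamma.
Proof.
have unitB := unitmx_near cvg_Bmat (posdef_unitmx posB).
have solve : \forall v \near \oo, Avec (P v) = Bmat (P v) *m gamma_n (P v).
  near=> v; rewrite /gamma_n mulKVmx //; near: v; exact: unitB.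
exact: mx_cvg_unique (mx_cvg_near_eq solve cvg_Avec) (mx_cvg_mul cvg_Bmat cvg_gamma).
Unshelve. all: by end_near.
Qed.

Lemma Vn_gap_cvg (f : {set 'I_K}) :
  (fun v => Vn (Yf (P v)) f f - Vn (etaW (P v) gamma) f f) @ \oo -->
  c2 R K ^+ 2 * (gamma^T *m B *m gamma) 0 0.
Proof.
have limit_gap : 2 * (gamma^T *m A) 0 0 - (gamma^T *m B *m gamma) 0 0 =
    (gamma^T *m B *m gamma) 0 0.
  by rewrite normal_equations_limit mulmxA; ring.
rewrite -limit_gap; under eq_cvg do rewrite Vn_gap.
apply: cvgM; first exact: cvg_cst.
apply: cvgB; first (apply: cvgM; first exact: cvg_cst).
- exact: (mx_cvg_mul (mx_cvg_cst (L := gamma^T)) cvg_Avec).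
- exact: (mx_cvg_mul (mx_cvg_mul (mx_cvg_cst (L := gamma^T)) cvg_Bmat) (mx_cvg_cst (L := gamma))).
Qed.
End Limits.

Theorem mainTheorem9 (R : realType) (K p : nat) (P : nat -> population R K p)
  (gamma : 'cV[R]_p) :
  (* n -> infinity *)
  (forall N : nat, \forall v \near \oo, (N <= ntot (P v))%N) ->
  (* stratified design: n_{[m]q} >= 2 and sum_q n_{[m]q} = n_{[m]} *)
  (forall v (m : 'I_(M (P v))) q, (2 <= nmq (P v) m q)%N) ->
  (forall v (m : 'I_(M (P v))), (\sum_(q : treat K) nmq (P v) m q)%N = nst (P v) m) ->
  (* (C1) *)
  (exists (C1 : R) (einf : nat -> treat K -> R),
      0 < C1 < 1/2 /\
      (forall m q, C1 < einf m q < 1 - C1) /\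
      (fun v => bmax (fun m : 'I_(M (P v)) =>
                 bmax (fun q : treat K => `|es m q - einf (nat_of_ord m) q|)))
        @ \oo --> 0) ->
  (* (C2a), (C2b) *)
  (exists C2 : R, 0 < C2 /\ forall v (m : 'I_(M (P v))),
      (forall q, ((nst (P v) m)%:R)^-1 *
          \sum_(i < nst (P v) m) `|Yo (P v) m i q - avg (fun j => Yo (P v) m j q)| ^+ 2 <= C2) /\
      ((nst (P v) m)%:R)^-1 *
          \sum_(i < nst (P v) m) ninf (Xc (P v) m i - avgv (Xc (P v) m)) ^+ 2 <= C2) ->
  (* (C3a) *)
  (fun v => ((ntot (P v))%:R)^-1 *
     bmax (fun m : 'I_(M (P v)) => bmax (fun i : 'I_(nst (P v) m) => bmax (fun q : treat K =>
       `|Yo (P v) m i q - avg (fun j => Yo (P v) m j q)| ^+ 2)))) @ \oo --> 0 ->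
  (* (C3b) *)
  (fun v => ((ntot (P v))%:R)^-1 *
     bmax (fun m : 'I_(M (P v)) => bmax (fun i : 'I_(nst (P v) m) =>
       ninf (Xc (P v) m i - avgv (Xc (P v) m)) ^+ 2))) @ \oo --> 0 ->
  (* (C4) *)
  (forall q, exists l : R, (fun v => SWe (Yf (P v)) q) @ \oo --> l) ->
  (forall q q', exists l : R, (fun v => SWW (Yf (P v)) q q') @ \oo --> l) ->
  (* (C5) *)
  (forall q, exists (L1 L2 : 'M[R]_p) (L3 L4 : 'cV[R]_p),
      mx_cvg (fun v => SXXe (P v) q) L1 /\ mx_cvg (fun v => SXX (P v)) L2 /\
      mx_cvg (fun v => SXYe (P v) q) L3 /\ mx_cvg (fun v => SXY (P v) q) L4 /\
      posdef L1 /\ posdef L2 /\ posdef (L1 - L2)) ->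
  (* gamma is the limit defining the conditional adjustment coefficient *)
  mx_cvg (fun v => gamma_n (P v)) gamma ->
  (* (C7) *)
  (forall q, exists l : R, (fun v => SWe (etaW (P v) gamma) q) @ \oo --> l) ->
  (forall q q', exists l : R, (fun v => SWW (etaW (P v) gamma) q q') @ \oo --> l) ->
  (* conclusion: for every factorial effect f, with V(.) and tilde V(.) the limits *)
  forall f : {set 'I_K}, f != finset.set0 ->
  forall lVY lVeta lVtY lVteta : R,
    (fun v => Vn (Yf (P v)) f f) @ \oo --> lVY ->
    (fun v => Vn (etaW (P v) gamma) f f) @ \oo --> lVeta ->
    (fun v => Vtn (Yf (P v)) f f) @ \oo --> lVtY ->
    (fun v => Vtn (etaW (P v) gamma) f f) @ \oo --> lVteta ->
    lVteta <= lVtY /\ lVeta <= lVY.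
Proof.
move=> _ _ _ _ _ _ _ _ _ C5 cvg_gamma _ _ f f0 lVY lVeta lVtY lVteta cVY cVeta cVtY cVteta.
have limits q : exists l : 'M[R]_p * 'cV[R]_p,
    [/\ mx_cvg (fun v => SXXe (P v) q) l.1,
        mx_cvg (fun v => SXYe (P v) q) l.2 & posdef l.1].
  have [L1 [_ [L3 [_ [c1 [_ [c3 [_ [pL1 _]]]]]]]]] := C5 q.
  by exists (L1, L3).
have [L HL] := choice limits.
pose B := \sum_q (L q).1.
have cvg_Bmat : mx_cvg (fun v => Bmat (P v)) B.
  rewrite (funext (fun v => Bmat_SXXe (P v))).
  by apply: mx_cvg_sum => q _; case: (HL q).
have cvg_Avec : mx_cvg (fun v => Avec (P v)) (\sum_q (L q).2).
  rewrite (funext (fun v => Avec_SXYe (P v))).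
  by apply: mx_cvg_sum => q _; case: (HL q).
have posB : posdef B.
  by apply: (posdef_sum ([ffun=> true] : treat K)) => q; case: (HL q).
have gap := Vn_gap_cvg cvg_Bmat cvg_Avec posB cvg_gamma f.
have gapV : lVY - lVeta = c2 R K ^+ 2 * (gamma^T *m B *m gamma) 0 0.
  exact: cvg_unique _ (cvgB cVY cVeta) gap.
have gapt : (fun v => Vtn (Yf (P v)) f f - Vtn (etaW (P v) gamma) f f) @ \oo -->
    c2 R K ^+ 2 * (gamma^T *m B *m gamma) 0 0.
  by under eq_cvg do rewrite (Vtn_gap _ _ f0).
have gapVt : lVtY - lVteta = c2 R K ^+ 2 * (gamma^T *m B *m gamma) 0 0.
  exact: cvg_unique _ (cvgB cVtY cVteta) gapt.
have gap_ge0 : 0 <= c2 R K ^+ 2 * (gamma^T *m B *m gamma) 0 0.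
  by rewrite mulr_ge0 ?sqr_ge0 ?posdef_quad_ge0.
by split; rewrite -subr_ge0 ?gapV ?gapVt.
Qed.
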